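(* For every $y\in(0,1)$, $$\frac{\pi}{2}\,y\cot\left(\frac{\pi y}{2}\right)\log y\le\log\left(\sin\left(\frac{\pi y}{2}\right)\right),\qquad y\coth(y)\log y\le\log(\sinh(y)),$$ $$\log\left(\tan\left(\frac{\pi y}{2}\right)\right)\ge\frac{\pi}{2}\,y\log(y)\csc\left(\frac{\pi y}{2}\right)\sec\left(\frac{\pi y}{2}\right).$$ *)

From Stdlib Require Import Reals.
Open Scope R_scope.
Definition cot (x : R) : R := cos x / sin x.
Definition coth (x : R) : R := cosh x / sinh x.
Definition csc (x : R) : R := / sin x.
Definition sec (x : R) : R := / cos x.

(* The gap
   [(PI/2) y cot(PI y/2) ln y - ln (sin (PI y/2))] vanishes at [y = 1] and has
   derivative [(PI/2) (- ln y) (PI y/2 - sin cos) / sin^2 > 0] on (0,1), since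
   [sin u cos u = sin (2u) / 2 < u].  For the hyperbolic bound, [tanh y < y < sinh y]
   gives [y coth y ln y <= ln y < ln (sinh y)].  The third inequality follows from the
   first because [csc u sec u = cot u + tan u] and [ln (cos u) < 0 < tan u]. *)
From Stdlib Require Import Reals Lra.
From Coquelicot Require Import Coquelicot.
Open Scope R_scope.

Lemma ln_lt_0 (x : R) : 0 < x < 1 -> ln x < 0.
Proof. intros Hx. rewrite <- ln_1. apply ln_increasing; lra. Qed.

Lemma lt_of_deriv_pos (f f' : R -> R) (a b : R) : a < b ->
  (forall c, a <= c <= b -> derivable_pt_lim f c (f' c)) ->
  (forall c, a < c < b -> 0 < f' c) -> f a < f b.
Proof.
intros Hab Hder Hpos.
destruct (MVT_cor2 f f' a b Hab Hder) as [c [Hdiff Hc]].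
specialize (Hpos c Hc). nra.
Qed.

Lemma sin_mul_cos_lt (u : R) : 0 < u -> sin u * cos u < u.
Proof. intros Hu. pose proof (sin_lt_x (2 * u)) as Hsin. rewrite sin_2a in Hsin. lra. Qed.

Lemma sin_half_PI_mul_pos (y : R) : 0 < y <= 1 -> 0 < sin (PI * y / 2).
Proof. intros Hy. pose proof PI_RGT_0. apply sin_gt_0; nra. Qed.

Lemma cos_half_PI_mul_pos (y : R) : 0 < y < 1 -> 0 < cos (PI * y / 2).
Proof. intros Hy. pose proof PI_RGT_0. apply cos_gt_0; nra. Qed.

Definition cot_log_gap (y : R) : R :=
  (PI / 2) * y * (cos (PI * y / 2) / sin (PI * y / 2)) * ln y - ln (sin (PI * y / 2)).

Definition cot_log_gap' (y : R) : R :=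
  (PI / 2) * (- ln y) * (PI * y / 2 - sin (PI * y / 2) * cos (PI * y / 2))
  / sin (PI * y / 2) ^ 2.

Lemma is_derive_cot_log_gap (y : R) : 0 < y <= 1 ->
  is_derive cot_log_gap y (cot_log_gap' y).
Proof.
intros Hy. pose proof (sin_half_PI_mul_pos y Hy) as Hs.
unfold cot_log_gap, cot_log_gap'. auto_derive.
- repeat split; lra.
- change (PI * y * / 2) with (PI * y / 2).
  pose proof (sin2_cos2 (PI * y / 2)) as Hpyth. unfold Rsqr in Hpyth.
  set (s := sin (PI * y / 2)) in *. set (c := cos (PI * y / 2)) in *.
  field_simplify; [|lra..].
  replace (c ^ 2) with (1 - s * s) by (simpl; lra).
  field. lra.
Qed.

Lemma cot_log_le_ln_sin (y : R) : 0 < y < 1 ->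
  (PI / 2) * y * cot (PI * y / 2) * ln y <= ln (sin (PI * y / 2)).
Proof.
intros Hy.
assert (Hgap : cot_log_gap y < cot_log_gap 1).
{ apply (lt_of_deriv_pos cot_log_gap cot_log_gap' y 1); [lra | |].
  - intros c Hc. apply is_derive_Reals, is_derive_cot_log_gap. lra.
  - intros c Hc. pose proof PI_RGT_0.
    pose proof (sin_half_PI_mul_pos c ltac:(lra)) as Hs.
    pose proof (ln_lt_0 c ltac:(lra)) as Hl.
    pose proof (sin_mul_cos_lt (PI * c / 2) ltac:(nra)) as Hsc.
    unfold cot_log_gap'. apply Rdiv_lt_0_compat; [|nra].
    apply Rmult_lt_0_compat; [|lra]. nra. }
unfold cot_log_gap in Hgap. replace (PI * 1 / 2) with (PI / 2) in Hgap by field.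
rewrite sin_PI2, ln_1 in Hgap. unfold cot. lra.
Qed.

Lemma csc_mul_sec (u : R) : sin u <> 0 -> cos u <> 0 ->
  csc u * sec u = cot u + tan u.
Proof.
intros Hs Hc. unfold csc, sec, cot, tan.
replace (/ sin u * / cos u) with ((sin u ^ 2 + cos u ^ 2) / (sin u * cos u)).
- field. auto.
- rewrite <- !Rsqr_pow2, sin2_cos2. field. auto.
Qed.

Lemma csc_sec_log_le_ln_tan (y : R) : 0 < y < 1 ->
  (PI / 2) * y * ln y * csc (PI * y / 2) * sec (PI * y / 2) <= ln (tan (PI * y / 2)).
Proof.
intros Hy. pose proof (cot_log_le_ln_sin y Hy) as Hcot.
pose proof (sin_half_PI_mul_pos y ltac:(lra)) as Hs.
pose proof (cos_half_PI_mul_pos y Hy) as Hc.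
pose proof (Rmult_lt_0_compat _ _ (PI2_RGT_0) (proj1 Hy)) as Hk.
pose proof (ln_lt_0 y Hy) as Hl.
set (u := PI * y / 2) in *.
assert (Hcos : ln (cos u) < 0).
{ apply ln_lt_0. split; [lra|].
  pose proof (sin2_cos2 u) as Hpyth. unfold Rsqr in Hpyth. nra. }
assert (Htan : 0 < tan u) by (apply Rdiv_lt_0_compat; lra).
rewrite Rmult_assoc, csc_mul_sec by lra.
unfold tan at 2. rewrite ln_div by lra. fold (tan u).
assert (Hneg : PI / 2 * y * ln y * tan u < 0).
{ pose proof (Rmult_lt_0_compat _ _ Hk Htan). nra. }
replace (PI / 2 * y * ln y * (cot u + tan u))
  with (PI / 2 * y * cot u * ln y + PI / 2 * y * ln y * tan u) by ring.
lra.
Qed.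

Lemma cosh_gt_1 (y : R) : 0 < y -> 1 < cosh y.
Proof.
intros Hy. rewrite <- cosh_0.
apply (lt_of_deriv_pos cosh sinh 0 y Hy).
- intros c _. apply derivable_pt_lim_cosh.
- intros c Hc. rewrite <- sinh_0. apply sinh_lt. lra.
Qed.

Lemma lt_sinh_self (y : R) : 0 < y -> y < sinh y.
Proof.
intros Hy.
enough (Hlt : sinh 0 - 0 < sinh y - y) by (rewrite sinh_0 in Hlt; lra).
apply (lt_of_deriv_pos (fun x => sinh x - x) (fun x => cosh x - 1) 0 y Hy).
- intros c _. apply (derivable_pt_lim_minus sinh id).
  + apply derivable_pt_lim_sinh.
  + apply derivable_pt_lim_id.
- intros c Hc. pose proof (cosh_gt_1 c ltac:(lra)). lra.
Qed.

Lemma sinh_lt_mul_cosh (y : R) : 0 < y -> sinh y < y * cosh y.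
Proof.
intros Hy.
enough (Hlt : 0 * cosh 0 - sinh 0 < y * cosh y - sinh y)
  by (rewrite sinh_0 in Hlt; lra).
apply (lt_of_deriv_pos (fun x => x * cosh x - sinh x)
  (fun x => (1 * cosh x + x * sinh x) - cosh x) 0 y Hy).
- intros c _. apply (derivable_pt_lim_minus (fun x => x * cosh x) sinh).
  + apply (derivable_pt_lim_mult id cosh).
    * apply derivable_pt_lim_id.
    * apply derivable_pt_lim_cosh.
  + apply derivable_pt_lim_sinh.
- intros c Hc. assert (0 < sinh c) by (rewrite <- sinh_0; apply sinh_lt; lra).
  nra.
Qed.

Lemma coth_log_le_ln_sinh (y : R) : 0 < y < 1 -> y * coth y * ln y <= ln (sinh y).
Proof.
intros Hy.
pose proof (lt_sinh_self y (proj1 Hy)) as Hsinh.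
pose proof (sinh_lt_mul_cosh y (proj1 Hy)) as Htanh.
pose proof (ln_lt_0 y Hy) as Hl.
assert (Hcoth : 1 <= y * coth y).
{ unfold coth. apply (Rmult_le_reg_r (sinh y)); [lra|].
  field_simplify; lra. }
assert (ln y < ln (sinh y)) by (apply ln_increasing; lra).
nra.
Qed.

Theorem lemma4p4 : forall y : R, 0 < y < 1 ->
  (PI / 2) * y * cot (PI * y / 2) * ln y <= ln (sin (PI * y / 2)) /\
  y * coth y * ln y <= ln (sinh y) /\
  ln (tan (PI * y / 2)) >= (PI / 2) * y * ln y * csc (PI * y / 2) * sec (PI * y / 2).
Proof.
intros y Hy. split; [|split].
- exact (cot_log_le_ln_sin y Hy).
- exact (coth_log_le_ln_sinh y Hy).
- apply Rle_ge, csc_sec_log_le_ln_tan, Hy.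
Qed.
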